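(* Let $\mathcal{I}$ be an instance of vertex cover and let $\mathcal{T}_S(\mathcal{I})$ be a branch-and-bound tree generated by strong-branching (product score) with worst-bound node selection, ties broken by largest depth. Let $N$ be a node of $\mathcal{T}_S(\mathcal{I})$ whose LP optimal value is less than $\mathrm{OPT}(\mathcal{I})$. Then strong-branching branches at $N$ on some $v\notin I(\mathcal{I},N)$, and both children $N_{v,0}$ and $N_{v,1}$ have LP optimal value at least $\tfrac12$ more than that of $N$.
   Context: Vertex cover IP for a graph $G=(V,E)$: minimize $\sum_v x_v$ subject to $x_u+x_v\ge1$ ($uv\in E$), $x\in\{0,1\}^V$; LP relaxation uses $x\in[0,1]^V$; $\mathrm{OPT}(\mathcal{I})$ is the IP optimal value. Each node $N$ is the LP relaxation plus fixings of variables to $0$ or $1$ made on the path from the root; $N_{v,0},N_{v,1}$ denote the children obtained by adding $x_v=0$, $x_v=1$. The LP solver returns some optimal solution at each node. Strong branching with product score: at $N$ with LP value $z$ and returned solution $\hat x$, for each $j$ with $\hat x_j$ fractional compute children's LP values $z^0_j,z^1_j$ ($+\infty$ if infeasible), $\Delta^-_j=z^0_j-z$, $\Delta^+_j=z^1_j-z$, and branch on a maximizer of $\mathrm{score}_P(j)=\Delta^+_j\Delta^-_j$ (with $0\cdot\infty=0$). Worst-bound rule: process an open node of smallest LP value. $I(\mathcal{I},N)$ is the union, over all optimal solutions $x$ of the LP at $N$, of $\{j:x_j\in\{0,1\}\}$. *)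

From HB Require Import structures.
From mathcomp Require Import all_boot all_order all_algebra.
From mathcomp Require Import all_classical all_reals.
From mathcomp Require Import ereal.

Set Implicit Arguments. Unset Strict Implicit. Unset Printing Implicit Defensive.
Import Order.TTheory GRing.Theory Num.Theory.
Local Open Scope classical_set_scope.
Local Open Scope ring_scope.

Section VertexCoverBB.
Variables (R : realType) (V : finType) (e : rel V).

(* A node of the branch-and-bound tree is the (ordered) list of fixings
   x_v = b made on the path from the root; the root is [::];
   its depth is its size. *)
Definition node := seq (V * bool).

Definition child (N : node) (v : V) (b : bool) : node := rcons N (v, b).

Definition lp_feas (N : node) (x : V -> R) : Prop :=
  (forall u v, e u v -> 1 <= x u + x v) /\
  (forall v, 0 <= x v <= 1) /\
  (forall v b, (v, b) \in N -> x v = (b : nat)%:R).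

Definition obj (x : V -> R) : R := \sum_(v : V) x v.

(* LP optimal value at N (+oo if infeasible) *)
Definition lp_val (N : node) : \bar R :=
  ereal_inf [set (obj x)%:E | x in lp_feas N].

Definition lp_opt (N : node) (x : V -> R) : Prop :=
  lp_feas N x /\ forall y, lp_feas N y -> obj x <= obj y.

Definition integral (x : V -> R) : Prop := forall v, x v = 0 \/ x v = 1.

Definition fractional (x : V -> R) (v : V) : Prop := 0 < x v < 1.

Definition OPT : \bar R :=
  ereal_inf [set (obj x)%:E | x in [set x | lp_feas [::] x /\ integral x]].

Definition Iset (N : node) : set V :=
  [set j | exists x, lp_opt N x /\ (x j = 0 \/ x j = 1)].

Definition scoreP (N : node) (j : V) : \bar R :=
  ((lp_val (child N j true) - lp_val N) * (lp_val (child N j false) - lp_val N))%E.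

Definition sb_choice (N : node) (xhat : V -> R) (v : V) : Prop :=
  fractional xhat v /\
  forall j, fractional xhat j -> (scoreP N j <= scoreP N v)%E.

Definition wb_select (open : seq node) (N : node) : Prop :=
  N \in open /\
  forall M, M \in open ->
    (lp_val N <= lp_val M)%E /\ (lp_val N = lp_val M -> (size M <= size N)%N).

Record bb_state := BBState {
  bb_open : seq node;
  bb_inc : \bar R;                  (* incumbent value (+oo if none) *)
  bb_nodes : seq node;
  bb_branch : seq (node * V)
}.

Definition bb_init : bb_state := BBState [:: [::]] +oo%E [:: [::]] [::].

Inductive bb_step : bb_state -> bb_state -> Prop :=
| bb_prune s N :
    wb_select (bb_open s) N ->
    (bb_inc s <= lp_val N)%E ->
    bb_step s (BBState (rem N (bb_open s)) (bb_inc s) (bb_nodes s) (bb_branch s))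
| bb_integral s N xhat :
    wb_select (bb_open s) N ->
    (lp_val N < bb_inc s)%E ->
    lp_opt N xhat -> integral xhat ->
    bb_step s (BBState (rem N (bb_open s)) (obj xhat)%:E (bb_nodes s) (bb_branch s))
| bb_branch_step s N xhat v :
    wb_select (bb_open s) N ->
    (lp_val N < bb_inc s)%E ->
    lp_opt N xhat -> ~ integral xhat ->
    sb_choice N xhat v ->
    bb_step s (BBState (child N v false :: child N v true :: rem N (bb_open s))
                       (bb_inc s)
                       (child N v false :: child N v true :: bb_nodes s)
                       ((N, v) :: bb_branch s)).

Inductive bb_reach : bb_state -> Prop :=
| bb_reach_init : bb_reach bb_init
| bb_reach_step s s' : bb_reach s -> bb_step s s' -> bb_reach s'.

(* a complete run: reachable state with no open node left; its tree
   T_S(I) consists of bb_nodes, with branchings bb_branch *)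
Definition bb_complete (s : bb_state) : Prop := bb_reach s /\ bb_open s = [::].

End VertexCoverBB.

(* A feasible LP solution with a coordinate outside {0, 1/2, 1} is a proper
   convex combination of its rounding to the nearest of 0, 1/2, 1 and of a
   feasible "stretched" solution with fewer such coordinates.  Hence the LP
   optimum at every node is attained at half-integral points, and every
   feasible point is dominated by a half-integral one with the same 0/1
   coordinates.  As twice the cost of a half-integral point is an integer,
   fixing a variable [v] outside I(N) raises the LP value by at least 1/2, so
   such [v] have positive product score, whereas a variable in I(N) has a child
   with unchanged LP value and hence score 0.  When LP(N) < OPT some variable
   lies outside I(N), since otherwise mixing and rounding optima yields an
   integral optimum; so strong branching picks one.  Finally, branch-and-bound
   never closes a node whose LP value is below OPT, so every such node is
   branched. *)

From HB Require Import structures.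
From mathcomp Require Import all_boot all_order all_algebra.
From mathcomp Require Import all_classical all_reals.
From mathcomp Require Import ereal lra.
Import Order.TTheory GRing.Theory Num.Theory.
Local Open Scope classical_set_scope.
Local Open Scope ring_scope.
Set Implicit Arguments. Unset Strict Implicit.

Section Objective.
Variables (R : realType) (V : finType).

Lemma obj_comb (a b : R) (f g h : V -> R) :
  (forall u, f u = a * g u + b * h u) -> obj f = a * obj g + b * obj h.
Proof.
move=> fE; rewrite /obj (eq_bigr _ (fun u _ => fE u)) big_split /=.
by rewrite -!mulr_sumr.
Qed.

Definition half_integral (w : V -> R) : Prop := forall u, w u \in [:: 0; 2^-1; 1].

Lemma half_integral_obj w : half_integral w -> exists k : nat, obj w * 2 = k%:R.
Proof.
move=> hw.
exists (\sum_(u : V) (if w u == 0%R then 0 else if w u == 1%R then 2 else 1))%N.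
rewrite /obj mulr_suml natr_sum; apply: eq_bigr => u _.
move: (hw u); rewrite !inE => /or3P [] /eqP ->; rewrite ?eqxx ?mul0r //.
- have /negbTE -> : (2^-1 : R) != 0 by apply/eqP; lra.
  have /negbTE -> : (2^-1 : R) != 1 by apply/eqP; lra.
  by rewrite mulVf.
- by rewrite oner_eq0 mul1r.
Qed.

End Objective.

Section HalfIntegrality.
Variables (R : realType) (V : finType) (e : rel V) (N : node V).
Implicit Types (y w : V -> R) (k : R).

Definition half_round y : V -> R :=
  fun u => if y u < 2^-1 then 0 else if 2^-1 < y u then 1 else 2^-1.

(* [stretch k y] multiplies the distance of each coordinate to the nearer of
   0 and 1 by [k]; it is defined so that [y] is the convex combination
   [k^-1 * stretch k y + (1 - k^-1) * half_round y] (see [obj_stretch]). *)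
Definition stretch k y : V -> R :=
  fun u => if y u < 2^-1 then k * y u
           else if 2^-1 < y u then 1 - k * (1 - y u) else 2^-1.

Definition off_half y : pred V := fun u => y u \notin [:: 0; 2^-1; 1].

Lemma half_round_lt y u : y u < 2^-1 -> half_round y u = 0.
Proof. by rewrite /half_round => ->. Qed.

Lemma half_round_gt y u : 2^-1 < y u -> half_round y u = 1.
Proof. by rewrite /half_round => h; rewrite h ltNge ltW. Qed.

Lemma half_round_eq y u : y u = 2^-1 -> half_round y u = 2^-1.
Proof. by rewrite /half_round => ->; rewrite ltxx. Qed.

Lemma stretch_lt k y u : y u < 2^-1 -> stretch k y u = k * y u.
Proof. by rewrite /stretch => ->. Qed.

Lemma stretch_gt k y u : 2^-1 < y u -> stretch k y u = 1 - k * (1 - y u).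
Proof. by rewrite /stretch => h; rewrite h ltNge ltW. Qed.

Lemma stretch_eq k y u : y u = 2^-1 -> stretch k y u = 2^-1.
Proof. by rewrite /stretch => ->; rewrite ltxx. Qed.

Lemma half_round_half_integral y : half_integral (half_round y).
Proof.
move=> u; rewrite !inE; case: (ltgtP (y u) (2^-1)) => h.
- by rewrite half_round_lt ?eqxx.
- by rewrite half_round_gt ?eqxx ?orbT.
- by rewrite half_round_eq ?eqxx ?orbT.
Qed.

Lemma half_round_id y u : y u \in [:: 0; 2^-1; 1] -> half_round y u = y u.
Proof.
rewrite !inE => /or3P [] /eqP h; rewrite h.
- by rewrite half_round_lt // h; lra.
- exact: half_round_eq.
- by rewrite half_round_gt // h; lra.
Qed.

Lemma stretch_id k y u : y u \in [:: 0; 2^-1; 1] -> stretch k y u = y u.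
Proof.
rewrite !inE => /or3P [] /eqP h; rewrite h.
- by rewrite stretch_lt h ?mulr0 //; lra.
- exact: stretch_eq.
- by rewrite stretch_gt h ?subrr ?mulr0 ?subr0 //; lra.
Qed.

Lemma half_round_off y u : y u != 2^-1 -> half_round y u = 0 \/ half_round y u = 1.
Proof.
case: (ltgtP (y u) (2^-1)) => // h _.
- by left; rewrite half_round_lt.
- by right; rewrite half_round_gt.
Qed.

Lemma half_round_feas y : lp_feas e N y -> lp_feas e N (half_round y).
Proof.
case=> hE [hB hF]; split; [|split].
- move=> u v /hE h.
  case: (ltgtP (y u) (2^-1)) => hu; case: (ltgtP (y v) (2^-1)) => hv;
  rewrite ?(half_round_lt hu) ?(half_round_eq hu) ?(half_round_gt hu)
          ?(half_round_lt hv) ?(half_round_eq hv) ?(half_round_gt hv); lra.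
- move=> u; case: (ltgtP (y u) (2^-1)) => hu;
  rewrite ?(half_round_lt hu) ?(half_round_eq hu) ?(half_round_gt hu); lra.
- move=> v b /hF h; rewrite -h half_round_id // h !inE.
  by case: b {h} => /=; rewrite eqxx ?orbT.
Qed.

Lemma stretch_feas k y : 0 <= k ->
    (forall u, y u < 2^-1 -> k * y u <= 2^-1) ->
    (forall u, 2^-1 < y u -> k * (1 - y u) <= 2^-1) ->
  lp_feas e N y -> lp_feas e N (stretch k y).
Proof.
move=> k0 lo hi [hE [hB hF]]; split; [|split].
- move=> u v /hE h; have := hB u; have := hB v.
  case: (ltgtP (y u) (2^-1)) => hu; case: (ltgtP (y v) (2^-1)) => hv;
  rewrite ?(stretch_lt _ hu) ?(stretch_eq _ hu) ?(stretch_gt _ hu)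
          ?(stretch_lt _ hv) ?(stretch_eq _ hv) ?(stretch_gt _ hv);
  try have := lo _ hu; try have := hi _ hu; try have := lo _ hv; try have := hi _ hv;
  nra.
- move=> u; have := hB u.
  case: (ltgtP (y u) (2^-1)) => hu;
  rewrite ?(stretch_lt _ hu) ?(stretch_eq _ hu) ?(stretch_gt _ hu);
  try have := lo _ hu; try have := hi _ hu; nra.
- move=> v b /hF h; rewrite -h stretch_id // h !inE.
  by case: b {h} => /=; rewrite eqxx ?orbT.
Qed.

Lemma obj_stretch k y : k != 0 ->
  obj y = k^-1 * obj (stretch k y) + (1 - k^-1) * obj (half_round y).
Proof.
move=> k0; apply: obj_comb => u.
case: (ltgtP (y u) (2^-1)) => hu;
rewrite ?(stretch_lt _ hu) ?(stretch_eq _ hu) ?(stretch_gt _ hu)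
        ?(half_round_lt hu) ?(half_round_eq hu) ?(half_round_gt hu).
- by rewrite mulrA mulVf // mul1r mulr0 addr0.
- by rewrite mulrBr mulrA mulVf // mul1r mulr1; lra.
- by rewrite hu; lra.
Qed.

Lemma obj_half_round_or_stretch k y : 1 < k ->
  obj (half_round y) <= obj y \/ obj (stretch k y) < obj y.
Proof.
move=> k1; have k0 : k != 0 by apply/eqP; lra.
have hobj := obj_stretch y k0.
have ki0 : 0 < k^-1 by rewrite invr_gt0; lra.
have ki1 : k^-1 < 1 by rewrite invf_lt1 //; lra.
case: (lerP (obj (half_round y)) (obj y)) => h; [by left | right; nra].
Qed.

(* The stretching factor is chosen so that the off-half coordinate closest
   to 1/2 lands exactly on 1/2, while no coordinate crosses 1/2. *)
Lemma exists_stretch y : lp_feas e N y -> [exists u, off_half y u] ->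
  exists2 k, 1 < k &
    lp_feas e N (stretch k y) /\ (#|off_half (stretch k y)| < #|off_half y|)%N.
Proof.
move=> hy /existsP [u0 off0].
have hB := hy.2.1.
pose dist u := if y u < 2^-1 then y u else 1 - y u.
case: (arg_maxP dist off0) => u1 off1 dist_max.
set M := dist u1.
have /andP [M0 Mh] : 0 < M < 2^-1.
  move: off1 (hB u1); rewrite /off_half !inE /M /dist.
  case/norP => y0 /norP [yh y1] /andP [ylo yhi].
  have : 0 < y u1 by rewrite lt_neqAle eq_sym y0.
  have : y u1 < 1 by rewrite lt_neqAle y1.
  case: (ltgtP (y u1) (2^-1)) yh => //= h _ *; apply/andP; split; lra.
pose k := (2 * M)^-1.
have kM : k * M = 2^-1 by rewrite /k invfM -mulrA mulVf ?mulr1 //; lra.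
have k1 : 1 < k by rewrite /k invf_gt1; lra.
have k_dist u : y u != 2^-1 -> k * dist u <= 2^-1.
  move=> hu; rewrite -kM ler_wpM2l //; first lra.
  case: (boolP (off_half y u)) => [/dist_max //|].
  rewrite /off_half !inE negbK (negbTE hu) /= => /orP [] /eqP h;
  by rewrite /dist h; case: ltP; lra.
exists k => //; split.
  apply: stretch_feas => //; first lra.
  - move=> u hu; have := k_dist u; rewrite /dist hu /=; apply; apply/eqP; lra.
  - move=> u hu; have := k_dist u; rewrite /dist ltNge (ltW hu) /=; apply.
    by apply/eqP; lra.
apply: proper_card; apply/properP; split.
- apply/fintype.subsetP => u; apply: contra => hu; by rewrite stretch_id.
- exists u1 => //.
  have su1 : stretch k y u1 = 2^-1.
    have := kM; rewrite /M /dist.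
    case: (ltgtP (y u1) (2^-1)) => h /=.
    + by rewrite stretch_lt // => ->.
    + by rewrite stretch_gt // => ->; lra.
    + by move: off1; rewrite /off_half h !inE eqxx orbT.
  by rewrite unfold_in /off_half su1 !inE eqxx orbT.
Qed.

Lemma half_integral_below y : lp_feas e N y ->
  exists w, [/\ lp_feas e N w, half_integral w, obj w <= obj y &
                forall u, y u = 0 \/ y u = 1 -> w u = y u].
Proof.
have [n] := ubnP #|off_half y|; elim: n y => // n IH y hn hy.
case: (boolP [exists u, off_half y u]) => [hoff|/existsPn hhalf]; last first.
  by exists y; split => // u; have := hhalf u; rewrite /off_half negbK.
have [k k1 [hy1 hcard]] := exists_stretch hy hoff.
have keep u : y u = 0 \/ y u = 1 -> y u \in [:: 0; 2^-1; 1].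
  by case=> ->; rewrite !inE eqxx ?orbT.
case: (obj_half_round_or_stretch y k1) => [rnd_le|stretch_lt_obj].
  exists (half_round y); split => //; first exact: half_round_feas.
  - exact: half_round_half_integral.
  - by move=> u /keep; apply: half_round_id.
have [|w [hw whalf wle wkeep]] := IH (stretch k y) _ hy1.
  by apply: leq_trans hcard _; rewrite -ltnS.
exists w; split => //; first exact: le_trans (ltW stretch_lt_obj).
move=> u hu; have yu := keep u hu; by rewrite wkeep (stretch_id k yu).
Qed.

Lemma half_round_opt y : lp_opt e N y -> lp_opt e N (half_round y).
Proof.
case=> hy ymin; split; first exact: half_round_feas.
move=> z hz; apply: le_trans (ymin _ hz).
case: (boolP [exists u, off_half y u]) => [hoff|/existsPn hhalf].
  have [k k1 [hy1 _]] := exists_stretch hy hoff.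
  case: (obj_half_round_or_stretch y k1) => // hlt.
  by have := ymin _ hy1; rewrite leNgt hlt.
rewrite (_ : half_round y = y) //; apply/funext => u.
by apply: half_round_id; have := hhalf u; rewrite /off_half negbK.
Qed.

End HalfIntegrality.

Section LPValue.
Variables (R : realType) (V : finType) (e : rel V).
Implicit Types (N : node V) (x y xh : V -> R).

Lemma lp_val_opt N x : lp_opt e N x -> lp_val R e N = (obj x)%:E.
Proof.
case=> hx xmin; apply/le_anti/andP; split; first by apply: ereal_inf_lbound; exists x.
by apply: le_ereal_inf_tmp => _ [y hy <-]; rewrite lee_fin; exact: xmin.
Qed.

Lemma lp_opt_obj N x y : lp_opt e N x -> lp_opt e N y -> obj x = obj y.
Proof.
by move=> [hx xmin] [hy ymin]; apply/le_anti/andP; split; [exact: xmin | exact: ymin].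
Qed.

Lemma lp_feas_child N v (b : bool) y :
  lp_feas e (child N v b) y <-> lp_feas e N y /\ y v = b%:R.
Proof.
split=> [[hE [hB hF]]|[[hE [hB hF]] hv]].
  split; last by apply: hF; rewrite mem_rcons mem_head.
  by split=> //; split=> // w c hw; apply: hF; rewrite mem_rcons inE hw orbT.
split=> //; split=> // w c; rewrite mem_rcons inE => /orP [/eqP [-> ->] //|].
exact: hF.
Qed.

Lemma lp_val_child_ge N v b : (lp_val R e N <= lp_val R e (child N v b))%E.
Proof. by apply: ereal_inf_le_tmp => _ [y /lp_feas_child [hy _] <-]; exists y. Qed.

Lemma lp_opt_comb N x y (a : R) : 0 <= a <= 1 ->
  lp_opt e N x -> lp_opt e N y -> lp_opt e N (fun u => a * x u + (1 - a) * y u).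
Proof.
move=> /andP [a0 a1] hxo hyo; have oxy := lp_opt_obj hxo hyo.
case: hxo => [[xE [xB xF]] xmin]; case: hyo => [[yE [yB yF]] _].
have hobj : obj (fun u => a * x u + (1 - a) * y u) = obj x.
  by rewrite (obj_comb (g := x) (h := y) (a := a) (b := 1 - a)) // -oxy; lra.
split=> [|z hz]; last by rewrite hobj xmin.
split; [|split].
- by move=> u v huv; have := xE _ _ huv; have := yE _ _ huv; nra.
- by move=> u; have := xB u; have := yB u; move=> /andP [? ?] /andP [? ?]; nra.
- by move=> u b hub; rewrite (xF _ _ hub) (yF _ _ hub); lra.
Qed.

(* Replace [y] by a half-integral [w] and [xh] by [half_round xh]: twice
   their costs are integers, and [obj xh < obj w] as [v] is not in I(N). *)
Lemma notin_Iset_obj_gap N xh v y : lp_opt e N xh -> ~ Iset R e N v ->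
  lp_feas e N y -> y v = 0 \/ y v = 1 -> obj xh + 2^-1 <= obj y.
Proof.
move=> hxh hv hy yv01.
have [w [hw whalf wle wkeep]] := half_integral_below hy.
have xr_opt := half_round_opt hxh.
have xr_obj : obj (half_round xh) = obj xh := lp_opt_obj xr_opt hxh.
have xh_lt_w : obj xh < obj w.
  rewrite lt_def hxh.2 // andbT; apply/negP => /eqP xh_w; apply: hv.
  exists w; split; last by rewrite wkeep.
  by split=> // z hz; rewrite xh_w hxh.2.
have [k0 hk0] := half_integral_obj (half_round_half_integral xh).
have [k hk] := half_integral_obj whalf.
have : (k0 < k)%N by rewrite -(ltr_nat R) -hk -hk0 xr_obj; lra.
rewrite -(ler_nat R) -addn1 natrD -hk -hk0 xr_obj; lra.
Qed.

Lemma lp_val_child_gap N xh v b : lp_opt e N xh -> ~ Iset R e N v ->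
  (lp_val R e N + (2^-1)%:E <= lp_val R e (child N v b))%E.
Proof.
move=> hxh hv; rewrite (lp_val_opt hxh) -EFinD.
apply: le_ereal_inf_tmp => _ [y /lp_feas_child [hy yv] <-]; rewrite lee_fin.
by apply: (notin_Iset_obj_gap hxh hv hy); rewrite yv; case: b {yv}; auto.
Qed.

Lemma scoreP_Iset N v : Iset R e N v -> scoreP R e N v = 0%E.
Proof.
case=> x [hx xv].
have child_eq (b : bool) : x v = b%:R -> lp_val R e (child N v b) = lp_val R e N.
  move=> hb; apply/le_anti; rewrite lp_val_child_ge andbT (lp_val_opt hx).
  apply: ereal_inf_lbound; exists x => //.
  by apply/lp_feas_child; split => //; case: hx.
rewrite /scoreP.
by case: xv => [/(child_eq false)|/(child_eq true)] ->;
  rewrite (lp_val_opt hx) subee // ?mule0 ?mul0e.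
Qed.

Lemma scoreP_notin_Iset_gt0 N xh v : lp_opt e N xh -> ~ Iset R e N v ->
  (0 < scoreP R e N v)%E.
Proof.
move=> hxh hv; have gap b := lp_val_child_gap b hxh hv.
have gap_pos b : (0 < lp_val R e (child N v b) - lp_val R e N)%E.
  rewrite sube_gt0; apply: lt_le_trans (gap b).
  by rewrite (lp_val_opt hxh) -EFinD lte_fin; lra.
exact: mule_gt0.
Qed.

Lemma notin_Iset_fractional N xh j : lp_opt e N xh -> ~ Iset R e N j ->
  fractional xh j.
Proof.
move=> hxh hj; have /andP [x0 x1] := hxh.1.2.1 j.
by rewrite /fractional !lt_def x0 x1 !andbT; apply/andP; split;
  apply/eqP => xj; apply: hj; exists xh; auto.
Qed.

Lemma sb_choice_notin_Iset N xh v : lp_opt e N xh -> sb_choice e N xh v ->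
  (exists j, ~ Iset R e N j) -> ~ Iset R e N v.
Proof.
move=> hxh [_ vmax] [j hj] /scoreP_Iset v0.
have := le_lt_trans (vmax j (notin_Iset_fractional hxh hj)).
by rewrite v0 => /(_ _ (scoreP_notin_Iset_gt0 hxh hj)); rewrite ltxx.
Qed.

End LPValue.

Section Integrality.
Variables (R : realType) (V : finType) (e : rel V).
Implicit Types (N : node V) (x xh : V -> R).

(* Mixing with weight 1/4 an optimum integral at [j] into a half-integral
   optimum moves every coordinate off 1/2 at [j] and at the coordinates
   that were already integral, so rounding keeps all of them integral. *)
Lemma Iset_opt_integral_on N xh : lp_opt e N xh -> (forall j, Iset R e N j) ->
  forall s : seq V,
    exists c : V -> R, lp_opt e N c /\ {in s, forall i, c i = 0 \/ c i = 1}.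
Proof.
move=> hxh allI; elim=> [|j s [c [hc cs]]]; first by exists xh.
have [b [hb bj]] := allI j.
have cs' i : i \in s -> half_round c i = 0 \/ half_round c i = 1.
  move=> /cs ci; rewrite half_round_id //.
  by case: ci => ->; rewrite !inE eqxx ?orbT.
pose y u := 3/4 * half_round c u + (1 - 3/4) * b u.
have hy : lp_opt e N y by apply: lp_opt_comb (half_round_opt hc) hb; lra.
exists (half_round y); split; first exact: half_round_opt.
move=> i; rewrite inE => /predU1P [->|/cs' ci]; apply: half_round_off; rewrite /y.
- have := half_round_half_integral c j; rewrite !inE => /or3P [] /eqP ->;
  by case: bj => ->; apply/eqP; lra.
- have /andP [b0 b1] := hb.1.2.1 i.
  by case: ci => ->; apply/eqP; lra.
Qed.

Lemma OPT_le_integral N x : lp_feas e N x -> integral x -> (OPT R e <= (obj x)%:E)%E.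
Proof. by move=> [xE [xB _]] xint; apply: ereal_inf_lbound; exists x. Qed.

Lemma exists_notin_Iset N xh : lp_opt e N xh -> (lp_val R e N < OPT R e)%E ->
  exists j, ~ Iset R e N j.
Proof.
move=> hxh; apply: contraPP => none.
have allI j : Iset R e N j by apply: contrapT => hj; apply: none; exists j.
have [c [hc cint]] := Iset_opt_integral_on hxh allI (enum V).
apply/negP; rewrite (lp_val_opt hc) -leNgt; apply: OPT_le_integral hc.1 _ => v.
by apply: cint; rewrite mem_enum.
Qed.

End Integrality.

Section BranchAndBound.
Variables (R : realType) (V : finType) (e : rel V).

Definition low_nodes_handled (open nodes : seq (node V)) (br : seq (node V * V)) :=
  forall M, M \in nodes -> (lp_val R e M < OPT R e)%E ->
    M \in open \/ exists v, (M, v) \in br.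

Definition bb_inv (s : bb_state R V) : Prop :=
  [/\ forall p, p \in bb_branch s ->
        exists xh : V -> R, lp_opt e p.1 xh /\ sb_choice e p.1 xh p.2,
      (OPT R e <= bb_inc s)%E &
      low_nodes_handled (bb_open s) (bb_nodes s) (bb_branch s)].

Lemma low_nodes_handled_rem N open nodes br : (OPT R e <= lp_val R e N)%E ->
  low_nodes_handled open nodes br -> low_nodes_handled (rem N open) nodes br.
Proof.
move=> hN h M hM hlt; case: (h M hM hlt) => [hMo|]; last by right.
left; apply: rem_mem hMo; apply/eqP => MN.
by move: hlt; rewrite MN ltNge hN.
Qed.

Lemma bb_inv_step s s' : bb_step e s s' -> bb_inv s -> bb_inv s'.
Proof.
case=> {s s'} [s N _ hinc | s N xh _ _ hxh xint | s N xh v _ _ hxh _ hsb]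
  [sb_br opt_inc handled].
- split=> //; apply: low_nodes_handled_rem handled.
  exact: le_trans opt_inc hinc.
- have opt_xh := OPT_le_integral hxh.1 xint.
  split=> //; apply: low_nodes_handled_rem handled.
  by rewrite (lp_val_opt hxh).
- split=> //=.
    by move=> p; rewrite inE => /predU1P [-> | /sb_br //]; exists xh.
  move=> M; rewrite !inE => /or3P [/eqP -> | /eqP -> | hM] hlt;
    rewrite ?eqxx ?orbT; [by left | by left |].
  case: (handled M hM hlt) => [hMo | [w hw]].
    have [-> | MN] := eqVneq M N; first by right; exists v; rewrite mem_head.
    by left; rewrite (rem_mem MN hMo) !orbT.
  by right; exists w; rewrite inE hw orbT.
Qed.

Lemma bb_inv_reach s : bb_reach e s -> bb_inv s.
Proof.
elim=> [|{}s s' _ hs st]; last exact: bb_inv_step st hs.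
by split=> //; [rewrite leey | move=> M hM _; left].
Qed.

End BranchAndBound.

Theorem lemma3p1 (R : realType) (V : finType) (e : rel V)
    (e_sym : symmetric e) (e_irr : irreflexive e)
    (s : bb_state R V) (hs : bb_complete e s)
    (N : node V) (hN : N \in bb_nodes s)
    (hz : (lp_val R e N < OPT R e)%E) :
  (exists v, (N, v) \in bb_branch s) /\
  forall v, (N, v) \in bb_branch s ->
    ~ Iset R e N v /\
    (lp_val R e N + (2^-1)%:E <= lp_val R e (child N v false))%E /\
    (lp_val R e N + (2^-1)%:E <= lp_val R e (child N v true))%E.
Proof.
case: hs => /bb_inv_reach [sb_br _ handled] open0.
split; first by case: (handled N hN hz); rewrite ?open0.
move=> v /sb_br [xh [hxh hsb]].
have hv := sb_choice_notin_Iset hxh hsb (exists_notin_Iset hxh hz).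
by split=> //; split; apply: lp_val_child_gap hxh hv.
Qed.
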